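(* Let $L>0$ be fixed and let the constant renormalized force $F=F(N)>0$ satisfy $F(N)=o(N)$ as $N\to\infty$. Then the fixed point satisfies $$\max_{1\le k\le N}\Big|(x_{k-1}-x_k)-\frac LN\Big|=o\Big(\frac1N\Big)\quad (N\to\infty),$$ so in particular the particle density exists and is the constant $1/L$ on $[-L,0]$.
   Context: A configuration consists of $N+1$ point particles $-L\le x_N<\dots<x_1<x_0\le 0$ on $[-L,0]$ with potential energy $U=\sum_{i=1}^{N}\frac{\alpha_{int}}{x_{i-1}-x_i}-\sum_{i=0}^{N}\int_{-L}^{x_i}\alpha_{ext}F_0\,dx$, $\alpha_{int},\alpha_{ext}>0$, with constant $F_0>0$; the renormalized force is the constant $F=\frac{\alpha_{ext}}{\alpha_{int}}F_0$, which may depend on $N$ (the external force pushes particles towards $0$). Write $\delta_k=x_{k-1}-x_k$, $f_k=\delta_k^{-2}$. The walls at $0,-L$ are completely inelastic. A fixed point is a configuration with $x_0=0$, $f_{k+1}+F=f_k$ for $k=1,\dots,N-1$, and either $x_N=-L$ with $f_N\ge F$, or $x_N>-L$ with $f_N=F$; it exists and is unique. The density $\rho$ of the fixed points (as $N\to\infty$) is a function on $[-L,0]$ such that for every subinterval $I\subset[-L,0]$, $\int_I\rho(x)\,dx=\lim_{N\to\infty}\frac{\#\{i:x_i\in I\}}{N}$. *)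

From Stdlib Require Import Reals Lra Lia List.
Import ListNotations.
Open Scope R_scope.

(* A configuration of N+1 particles is x : nat -> R, with x 0, ..., x N used. *)

Definition gap (x : nat -> R) (k : nat) : R := x (k - 1)%nat - x k.

Definition fk (x : nat -> R) (k : nat) : R := / (gap x k ^ 2).

Definition configuration (L : R) (N : nat) (x : nat -> R) : Prop :=
  (forall i : nat, (1 <= i <= N)%nat -> x i < x (i - 1)%nat) /\
  -L <= x N /\ x 0%nat <= 0.

Definition fixed_point (L F : R) (N : nat) (x : nat -> R) : Prop :=
  configuration L N x /\
  x 0%nat = 0 /\
  (forall k : nat, (1 <= k <= N - 1)%nat -> fk x (k + 1) + F = fk x k) /\
  ((x N = -L /\ fk x N >= F) \/ (x N > -L /\ fk x N = F)).

Definition count_in (N : nat) (x : nat -> R) (a b : R) : nat :=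
  length (filter (fun i => if Rle_dec a (x i) then
                             (if Rle_dec (x i) b then true else false)
                           else false) (seq 0 (N + 1))).

From Stdlib Require Import Reals Lra Lia List.
From Coquelicot Require Import Rcomplements.
Open Scope R_scope.

(* At the fixed point f_k = f_N + (N - k) F, so the gaps increase with k and lie
   between delta_1 and delta_N.  Once F L^2 < N the last particle cannot be free
   (that would force f_1 = N F >= N^2 / L^2), so the gaps add up to L and
   N delta_1 <= L <= N delta_N.  The spread is controlled by
   delta_N^2 - delta_1^2 = delta_1^2 delta_N^2 (N - 1) F, which yields
   N (delta_N - delta_1) <= 2 L^3 F / N = o(1).  Summing gaps, x_i = -i L / N + o(1)
   uniformly in i, and counting the i with x_i in [a, b] gives the density 1/L. *)

Lemma gap_sum_bounds (x : nat -> R) (n : nat) (lo hi : R) :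
  (forall k, (1 <= k <= n)%nat -> lo <= gap x k <= hi) ->
  INR n * lo <= x 0%nat - x n <= INR n * hi.
Proof.
  induction n as [|n IH]; intros Hgap.
  - simpl; lra.
  - pose proof (IH (fun k Hk => Hgap k ltac:(lia))) as IHn.
    pose proof (Hgap (S n) ltac:(lia)) as Hn.
    unfold gap in Hn; replace (S n - 1)%nat with n in Hn by lia.
    rewrite S_INR; lra.
Qed.

Lemma configuration_gap_pos (L : R) (N : nat) (x : nat -> R) :
  configuration L N x -> forall k, (1 <= k <= N)%nat -> 0 < gap x k.
Proof. intros [Hdec _] k Hk; unfold gap; specialize (Hdec k Hk); lra. Qed.

Lemma fk_mul_gap_sq (x : nat -> R) (k : nat) : 0 < gap x k -> fk x k * gap x k ^ 2 = 1.
Proof. intros H; unfold fk; field; lra. Qed.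

Lemma gap_le_of_fk_le (x : nat -> R) (j k : nat) :
  0 < gap x j -> 0 < gap x k -> fk x j <= fk x k -> gap x k <= gap x j.
Proof.
  intros Hj Hk Hf; unfold fk in Hf.
  destruct (Rle_lt_dec (gap x k) (gap x j)) as [|Hlt]; [assumption|].
  assert (/ gap x k ^ 2 < / gap x j ^ 2).
  { apply Rinv_lt_contravar; [apply Rmult_lt_0_compat; apply pow_lt; lra | nra]. }
  lra.
Qed.

Lemma fixed_point_fk (L F : R) (N : nat) (x : nat -> R) :
  fixed_point L F N x -> forall k, (1 <= k <= N)%nat -> fk x k = fk x N + INR (N - k) * F.
Proof.
  intros [_ [_ [Hrec _]]] k Hk.
  remember (N - k)%nat as j eqn:Hj; revert k Hk Hj.
  induction j as [|j IH]; intros k Hk Hj.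
  - replace k with N by lia; simpl; lra.
  - rewrite <- (Hrec k ltac:(lia)), (IH (k + 1)%nat ltac:(lia) ltac:(lia)), S_INR; lra.
Qed.

Lemma fixed_point_gap_between (L F : R) (N : nat) (x : nat -> R) :
  0 <= F -> fixed_point L F N x ->
  forall k, (1 <= k <= N)%nat -> gap x 1 <= gap x k <= gap x N.
Proof.
  intros HF Hfp k Hk.
  pose proof (configuration_gap_pos _ _ _ (proj1 Hfp)) as Hpos.
  pose proof (fixed_point_fk _ _ _ _ Hfp) as Hfk.
  assert (INR (N - k) <= INR (N - 1)) by (apply le_INR; lia).
  assert (0 <= INR (N - k)) by apply pos_INR.
  split; apply gap_le_of_fk_le; try (apply Hpos; lia).
  - rewrite (Hfk k), (Hfk 1%nat) by lia; nra.
  - rewrite (Hfk k Hk); nra.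
Qed.

Lemma fixed_point_first_gap_le (L F : R) (N : nat) (x : nat -> R) :
  0 <= F -> fixed_point L F N x -> INR N * gap x 1 <= L.
Proof.
  intros HF Hfp.
  pose proof Hfp as [[_ [HxN _]] [Hx0 _]].
  pose proof (gap_sum_bounds x N (gap x 1) (gap x N) (fixed_point_gap_between _ _ _ _ HF Hfp)).
  lra.
Qed.

Lemma fixed_point_pinned (L F : R) (N : nat) (x : nat -> R) :
  0 <= F -> (1 <= N)%nat -> F * L ^ 2 < INR N -> fixed_point L F N x -> x N = -L.
Proof.
  intros HF HN HFL Hfp.
  pose proof Hfp as [Hconf [_ [_ Hend]]].
  destruct Hend as [[HxN _] | [_ HfN]]; [exact HxN | exfalso].
  set (u := gap x 1).
  assert (Hu : 0 < u) by (apply (configuration_gap_pos _ _ _ Hconf); lia).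
  assert (Hnu : INR N * u <= L) by exact (fixed_point_first_gap_le _ _ _ _ HF Hfp).
  assert (Hf1 : fk x 1 = INR N * F).
  { rewrite (fixed_point_fk _ _ _ _ Hfp 1%nat) by lia.
    rewrite HfN, minus_INR by lia; simpl INR; lra. }
  pose proof (fk_mul_gap_sq x 1 Hu) as Hfu; fold u in Hfu; rewrite Hf1 in Hfu.
  assert ((INR N * u) ^ 2 <= L ^ 2).
  { apply pow_incr; split; [apply Rmult_le_pos; [apply pos_INR | lra] | exact Hnu]. }
  assert (INR N = F * (INR N * u) ^ 2) by (rewrite <- (Rmult_1_r (INR N)), <- Hfu at 1; ring).
  nra.
Qed.

Lemma gap_spread_bound (n L F u v a c : R) :
  1 <= n -> 0 < F -> 2 * F * L ^ 2 <= n ->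
  0 < u -> u <= v -> n * u <= L ->
  a * u ^ 2 = 1 -> c * v ^ 2 = 1 -> a = c + (n - 1) * F ->
  n * (v - u) <= 2 * L ^ 3 * F / n.
Proof.
  intros Hn HF HFL Hu Huv HnuL Ha Hc Hac.
  assert (Ha0 : 0 < a).
  { destruct (Rlt_le_dec 0 a) as [|Hle]; [assumption|].
    assert (0 < u ^ 2) by (apply pow_lt; lra). nra. }
  assert (HaL : n ^ 2 <= a * L ^ 2).
  { assert ((n * u) ^ 2 <= L ^ 2) by (apply pow_incr; split; nra).
    assert (n ^ 2 = a * (n * u) ^ 2) by (rewrite <- (Rmult_1_l (n ^ 2)), <- Ha; ring).
    nra. }
  (* c = a - (n - 1) F >= n^2 / L^2 - n^2 / (2 L^2) *)
  assert (HcL : n ^ 2 <= 2 * c * L ^ 2) by nra.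
  assert (Hv : n ^ 2 * v ^ 2 <= 2 * L ^ 2).
  { assert (n ^ 2 * v ^ 2 <= 2 * (c * v ^ 2) * L ^ 2) by nra. rewrite Hc in *; lra. }
  assert (Hsq : (v - u) * (v + u) = u ^ 2 * v ^ 2 * ((n - 1) * F)).
  { transitivity ((a * u ^ 2) * v ^ 2 - (c * v ^ 2) * u ^ 2); [rewrite Ha, Hc; ring |].
    rewrite Hac; ring. }
  assert (Hvu : v - u <= u * v ^ 2 * ((n - 1) * F)).
  { apply Rmult_le_reg_r with u; [exact Hu|].
    replace (u * v ^ 2 * ((n - 1) * F) * u) with ((v - u) * (v + u)) by (rewrite Hsq; ring).
    apply Rmult_le_compat_l; lra. }
  assert (HX : 0 <= n * v ^ 2 * ((n - 1) * F)).
  { apply Rmult_le_pos; [apply Rmult_le_pos; [lra | apply pow2_ge_0] | nra]. }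
  apply Rmult_le_reg_r with n; [lra|].
  replace (2 * L ^ 3 * F / n * n) with (2 * L ^ 3 * F) by (field; lra).
  apply Rle_trans with ((n * u) * (n * v ^ 2 * ((n - 1) * F))).
  { replace ((n * u) * (n * v ^ 2 * ((n - 1) * F))) with ((n * n) * (u * v ^ 2 * ((n - 1) * F)))
      by ring.
    replace (n * (v - u) * n) with ((n * n) * (v - u)) by ring.
    apply Rmult_le_compat_l; nra. }
  apply Rle_trans with (L * (n * v ^ 2 * ((n - 1) * F))).
  { apply Rmult_le_compat_r; assumption. }
  assert (n * v ^ 2 * ((n - 1) * F) <= 2 * L ^ 2 * F).
  { apply Rle_trans with (n ^ 2 * v ^ 2 * F); [|apply Rmult_le_compat_r; lra].
    assert (0 <= v ^ 2 * F) by (apply Rmult_le_pos; [apply pow2_ge_0 | lra]). nra. }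
  assert (0 <= L) by nra.
  replace (2 * L ^ 3 * F) with (L * (2 * L ^ 2 * F)) by ring.
  apply Rmult_le_compat_l; assumption.
Qed.

Lemma fixed_point_gap_bound (L F : R) (N : nat) (x : nat -> R) :
  0 < L -> 0 < F -> (1 <= N)%nat -> 2 * F * L ^ 2 <= INR N -> fixed_point L F N x ->
  forall k, (1 <= k <= N)%nat -> Rabs (INR N * gap x k - L) <= 2 * L ^ 3 * F / INR N.
Proof.
  intros HL HF HN HFL Hfp k Hk.
  pose proof Hfp as [Hconf [Hx0 _]].
  pose proof (configuration_gap_pos _ _ _ Hconf) as Hpos.
  pose proof (fixed_point_gap_between _ _ _ _ (Rlt_le _ _ HF) Hfp) as Hbetween.
  assert (Hn : 1 <= INR N) by (apply (le_INR 1); lia).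
  assert (HxN : x N = -L).
  { assert (0 < F * L ^ 2) by (apply Rmult_lt_0_compat; [| apply pow_lt]; lra).
    apply (fixed_point_pinned L F N x); lra || assumption. }
  pose proof (gap_sum_bounds x N (gap x 1) (gap x N) Hbetween) as Hsum.
  rewrite Hx0, HxN in Hsum.
  assert (Hspread : INR N * (gap x N - gap x 1) <= 2 * L ^ 3 * F / INR N).
  { apply (gap_spread_bound (INR N) L F (gap x 1) (gap x N) (fk x 1) (fk x N)); try lra.
    - apply Hpos; lia.
    - apply Hbetween; lia.
    - apply fk_mul_gap_sq, Hpos; lia.
    - apply fk_mul_gap_sq, Hpos; lia.
    - rewrite (fixed_point_fk _ _ _ _ Hfp 1%nat), minus_INR by lia; simpl INR; lra. }
  pose proof (Hbetween k Hk) as [Hlo Hhi].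
  apply Rabs_le; split; nra.
Qed.

Lemma fixed_points_gaps_uniform (L : R) (F : nat -> R) (x : nat -> nat -> R) :
  0 < L -> (forall N, 0 < F N) -> Un_cv (fun N => F N / INR N) 0 ->
  (forall N, (1 <= N)%nat -> fixed_point L (F N) N (x N)) ->
  forall eps, 0 < eps -> exists N0, forall N, (N0 <= N)%nat ->
    forall k, (1 <= k <= N)%nat -> INR N * Rabs (gap (x N) k - L / INR N) <= eps.
Proof.
  intros HL HF HFo Hfp eps Heps.
  assert (HL2 : 0 < L ^ 2) by (apply pow_lt; lra).
  assert (HL3 : 0 < L ^ 3) by (apply pow_lt; lra).
  destruct (HFo (Rmin (/ (2 * L ^ 2)) (eps / (2 * L ^ 3)))) as [N1 HN1].
  { apply Rmin_pos; [apply Rinv_0_lt_compat | apply Rdiv_lt_0_compat]; lra. }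
  exists (Nat.max N1 1); intros N HN k Hk.
  assert (Hn : 1 <= INR N) by (apply (le_INR 1); lia).
  specialize (HN1 N ltac:(lia)); unfold R_dist in HN1; rewrite Rminus_0_r in HN1.
  apply Rle_lt_trans with (r1 := F N / INR N) in HN1; [|apply RRle_abs].
  pose proof (Rlt_le_trans _ _ _ HN1 (Rmin_l _ _)) as Hsmall.
  pose proof (Rlt_le_trans _ _ _ HN1 (Rmin_r _ _)) as Heps'.
  assert (HFL : 2 * F N * L ^ 2 <= INR N).
  { apply Rmult_lt_compat_r with (r := 2 * L ^ 2 * INR N) in Hsmall; [|nra].
    replace (F N / INR N * (2 * L ^ 2 * INR N)) with (2 * F N * L ^ 2) in Hsmall by (field; lra).
    replace (/ (2 * L ^ 2) * (2 * L ^ 2 * INR N)) with (INR N) in Hsmall by (field; lra). lra. }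
  replace (INR N * Rabs (gap (x N) k - L / INR N)) with (Rabs (INR N * gap (x N) k - L)).
  - eapply Rle_trans; [exact (fixed_point_gap_bound L (F N) N (x N) HL (HF N)
      ltac:(lia) HFL (Hfp N ltac:(lia)) k Hk) |].
    apply Rmult_lt_compat_r with (r := 2 * L ^ 3) in Heps'; [|lra].
    replace (eps / (2 * L ^ 3) * (2 * L ^ 3)) with eps in Heps' by (field; lra).
    replace (2 * L ^ 3 * F N / INR N) with (F N / INR N * (2 * L ^ 3)) by (field; lra). lra.
  - rewrite <- (Rabs_pos_eq (INR N)) at 2 by lra; rewrite <- Rabs_mult; f_equal; field; lra.
Qed.

Definition Rbetween (a b r : R) : bool :=
  if Rle_dec a r then if Rle_dec r b then true else false else false.

Lemma RbetweenP (a b r : R) : Rbetween a b r = true <-> a <= r <= b.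
Proof.
  unfold Rbetween; destruct (Rle_dec a r), (Rle_dec r b); split; intros H;
    solve [tauto | discriminate | exfalso; tauto].
Qed.

Lemma Rbetween_scale (a b r t : R) : 0 < r -> Rbetween (a / r) (b / r) t = true <-> a <= t * r <= b.
Proof.
  intros Hr; rewrite RbetweenP.
  assert (Ha : a = a / r * r) by (field; lra).
  assert (Hb : b = b / r * r) by (field; lra).
  split; intros [H1 H2]; split.
  - rewrite Ha; apply Rmult_le_compat_r; lra.
  - rewrite Hb; apply Rmult_le_compat_r; lra.
  - apply Rmult_le_reg_r with r; [exact Hr | rewrite <- Ha; exact H1].
  - apply Rmult_le_reg_r with r; [exact Hr | rewrite <- Hb; exact H2].
Qed.

Lemma count_in_filter (N : nat) (y : nat -> R) (a b : R) :
  count_in N y a b = length (filter (fun i => Rbetween a b (y i)) (seq 0 (N + 1))).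
Proof. reflexivity. Qed.

Lemma filter_length_mono {A : Type} (f g : A -> bool) (l : list A) :
  (forall z, In z l -> f z = true -> g z = true) ->
  (length (filter f l) <= length (filter g l))%nat.
Proof.
  induction l as [|z l IH]; intros Hfg; simpl; [lia|].
  specialize (IH (fun w Hw => Hfg w (or_intror Hw))).
  destruct (f z) eqn:Ef; destruct (g z) eqn:Eg; simpl; try lia.
  rewrite (Hfg z (or_introl eq_refl) Ef) in Eg; discriminate.
Qed.

Definition index_count (p q : R) (M : nat) : nat :=
  length (filter (fun i => Rbetween p q (INR i)) (seq 0 M)).

Lemma index_count_S (p q : R) (M : nat) :
  index_count p q (S M) = (index_count p q M + if Rbetween p q (INR M) then 1 else 0)%nat.
Proof.
  unfold index_count; rewrite seq_S, filter_app, length_app; simpl.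
  destruct (Rbetween p q (INR M)); reflexivity.
Qed.

Lemma index_count_le (p q : R) (M : nat) :
  INR (index_count p q M) <= Rmax 0 (Rmin (INR M) (q + 1) - p).
Proof.
  induction M as [|M IH].
  - simpl; apply Rmax_l.
  - rewrite index_count_S, plus_INR, S_INR.
    destruct (Rbetween p q (INR M)) eqn:E; [apply RbetweenP in E|]; simpl INR;
      unfold Rmax, Rmin in *; repeat destruct (Rle_dec _ _); lra.
Qed.

Lemma index_count_ge (p q : R) (M : nat) :
  0 <= p -> Rmin (INR M) q - p - 1 <= INR (index_count p q M).
Proof.
  intros Hp; induction M as [|M IH].
  - simpl; unfold Rmin; destruct (Rle_dec _ _); lra.
  - rewrite index_count_S, plus_INR, S_INR.
    pose proof (pos_INR (index_count p q M)).
    destruct (Rbetween p q (INR M)) eqn:E; [apply RbetweenP in E | rewrite <- Bool.not_true_iff_false, RbetweenP in E];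
      simpl INR; unfold Rmin in *; repeat destruct (Rle_dec _ _); lra.
Qed.

Lemma count_in_bounds (r e a b : R) (N : nat) (y : nat -> R) :
  0 < r -> 0 < e -> a <= b -> b <= 0 -> -a <= INR N * r ->
  (forall i, (i <= N)%nat -> Rabs (y i + INR i * r) <= e) ->
  (b - a - 2 * e) / r - 1 <= INR (count_in N y a b) <= (b - a + 2 * e) / r + 1.
Proof.
  intros Hr He Hab Hb HaN Hy.
  assert (Hyi : forall i, In i (seq 0 (N + 1)) -> -e <= y i + INR i * r <= e).
  { intros i Hi; apply in_seq in Hi; apply Rabs_le_between, Hy; lia. }
  rewrite count_in_filter; split.
  - assert (Hsub : (index_count ((- b + e) / r) ((- a - e) / r) (N + 1)
                    <= length (filter (fun i => Rbetween a b (y i)) (seq 0 (N + 1))))%nat).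
    { apply filter_length_mono; intros i Hi Hin.
      apply Rbetween_scale in Hin; [|exact Hr]; apply RbetweenP.
      specialize (Hyi i Hi); lra. }
    apply le_INR in Hsub.
    assert (Hp : 0 <= (- b + e) / r) by (apply Rlt_le, Rdiv_lt_0_compat; lra).
    assert (Hq : (- a - e) / r <= INR (N + 1)).
    { rewrite plus_INR; simpl INR.
      apply Rle_trans with (INR N); [|lra].
      apply Rmult_le_reg_r with r; [exact Hr|].
      replace ((- a - e) / r * r) with (- a - e) by (field; lra); lra. }
    pose proof (index_count_ge _ ((- a - e) / r) (N + 1) Hp) as Hge.
    rewrite Rmin_right in Hge by exact Hq.
    replace ((b - a - 2 * e) / r - 1) with ((- a - e) / r - (- b + e) / r - 1) by (field; lra).
    lra.
  - assert (Hsub : (length (filter (fun i => Rbetween a b (y i)) (seq 0 (N + 1)))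
                    <= index_count ((- b - e) / r) ((- a + e) / r) (N + 1))%nat).
    { apply filter_length_mono; intros i Hi Hin.
      apply RbetweenP in Hin; apply Rbetween_scale; [exact Hr|].
      specialize (Hyi i Hi); lra. }
    apply le_INR in Hsub.
    assert (Hpq : (- b - e) / r <= (- a + e) / r).
    { apply Rmult_le_compat_r; [apply Rlt_le, Rinv_0_lt_compat |]; lra. }
    pose proof (index_count_le ((- b - e) / r) ((- a + e) / r) (N + 1)) as Hle.
    replace ((b - a + 2 * e) / r + 1) with ((- a + e) / r + 1 - (- b - e) / r) by (field; lra).
    unfold Rmax, Rmin in Hle; repeat destruct (Rle_dec _ _) in Hle; lra.
Qed.

Lemma positions_of_uniform_gaps (L e : R) (N : nat) (y : nat -> R) :
  (1 <= N)%nat -> 0 <= e -> y 0%nat = 0 ->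
  (forall k, (1 <= k <= N)%nat -> INR N * Rabs (gap y k - L / INR N) <= e) ->
  forall i, (i <= N)%nat -> Rabs (y i + INR i * (L / INR N)) <= e.
Proof.
  intros HN He Hy0 Hgap i Hi.
  assert (Hn : 1 <= INR N) by (apply (le_INR 1); lia).
  assert (Hgap' : forall k, (1 <= k <= i)%nat ->
            L / INR N - e / INR N <= gap y k <= L / INR N + e / INR N).
  { intros k Hk.
    enough (Rabs (gap y k - L / INR N) <= e / INR N) as H by (apply Rabs_le_between in H; lra).
    apply Rmult_le_reg_l with (INR N); [lra|].
    replace (INR N * (e / INR N)) with e by (field; lra).
    apply Hgap; lia. }
  pose proof (gap_sum_bounds y i _ _ Hgap') as Hsum; rewrite Hy0 in Hsum.
  assert (INR i <= INR N) by (apply le_INR; exact Hi).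
  assert (0 <= INR i) by apply pos_INR.
  assert (INR i * (e / INR N) <= e).
  { apply Rmult_le_reg_r with (INR N); [lra|].
    replace (INR i * (e / INR N) * INR N) with (INR i * e) by (field; lra). nra. }
  apply Rabs_le; split; nra.
Qed.

Lemma density_of_uniform_gaps (L a b : R) (x : nat -> nat -> R) :
  0 < L -> -L <= a -> a <= b -> b <= 0 ->
  (forall N, (1 <= N)%nat -> x N 0%nat = 0) ->
  (forall eps, 0 < eps -> exists N0, forall N, (N0 <= N)%nat ->
     forall k, (1 <= k <= N)%nat -> INR N * Rabs (gap (x N) k - L / INR N) <= eps) ->
  Un_cv (fun N => INR (count_in N (x N) a b) / INR N) ((b - a) * (1 / L)).
Proof.
  intros HL Ha Hab Hb Hx0 Hgaps eta Heta.
  set (e := eta * L / 4).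
  assert (He : 0 < e) by (unfold e; nra).
  destruct (Hgaps e He) as [N0 HN0].
  destruct (archimed_cor1 (eta / 2)) as [N1 [HN1 HN1pos]]; [lra|].
  exists (Nat.max N0 N1); intros N HN.
  assert (HN1N : INR N1 <= INR N) by (apply le_INR; lia).
  assert (Hn1 : 0 < INR N1) by (apply lt_0_INR; lia).
  set (n := INR N) in *.
  assert (Hinv : / n < eta / 2).
  { apply Rle_lt_trans with (/ INR N1); [apply Rinv_le_contravar|]; lra. }
  assert (Hr : 0 < L / n) by (apply Rdiv_lt_0_compat; lra).
  assert (HaN : - a <= n * (L / n)) by (replace (n * (L / n)) with L by (field; lra); lra).
  pose proof (count_in_bounds (L / n) e a b N (x N) Hr He Hab Hb HaN
    (positions_of_uniform_gaps L e N (x N) ltac:(lia) (Rlt_le _ _ He)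
       (Hx0 N ltac:(lia)) (HN0 N ltac:(lia)))) as Hcount.
  set (C := INR (count_in N (x N) a b)) in *.
  replace ((b - a - 2 * e) / (L / n) - 1) with (n * ((b - a) / L - eta / 2 - / n)) in Hcount
    by (unfold e; field; lra).
  replace ((b - a + 2 * e) / (L / n) + 1) with (n * ((b - a) / L + eta / 2 + / n)) in Hcount
    by (unfold e; field; lra).
  unfold R_dist; apply Rabs_def1.
  - apply Rmult_lt_reg_l with n; [lra|].
    replace (n * (C / n - (b - a) * (1 / L))) with (C - n * ((b - a) / L)) by (field; lra).
    nra.
  - apply Rmult_lt_reg_l with n; [lra|].
    replace (n * (C / n - (b - a) * (1 / L))) with (C - n * ((b - a) / L)) by (field; lra).
    nra.
Qed.

Theorem theorem2 (L : R) (F : nat -> R) (x : nat -> nat -> R) :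
  0 < L ->
  (forall N : nat, 0 < F N) ->
  Un_cv (fun N => F N / INR N) 0 ->
  (forall N : nat, (1 <= N)%nat -> fixed_point L (F N) N (x N)) ->
  (forall eps : R, 0 < eps -> exists N0 : nat, forall N : nat, (N0 <= N)%nat ->
     forall k : nat, (1 <= k <= N)%nat ->
       INR N * Rabs (gap (x N) k - L / INR N) <= eps)
  /\
  (forall a b : R, -L <= a -> a <= b -> b <= 0 ->
     Un_cv (fun N => INR (count_in N (x N) a b) / INR N) ((b - a) * (1 / L))).
Proof.
  intros HL HF HFo Hfp.
  pose proof (fixed_points_gaps_uniform L F x HL HF HFo Hfp) as Hgaps.
  split; [exact Hgaps|].
  intros a b Ha Hab Hb.
  apply density_of_uniform_gaps; try assumption.
  intros N HN; exact (proj1 (proj2 (Hfp N HN))).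
Qed.
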